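(* Let $m,n$ be positive integers and let $U,V,U_0,\dots,U_{n-1},V_0,\dots,V_{n-1}$ be elements of the free lattice $\mathrm{F}_{\mathbf{L}}(m)$ (viewed as lattice terms in $m$ variables). Let $\mathbf{x}_0,\dots,\mathbf{x}_{m-1},\mathbf{y}_0,\dots,\mathbf{y}_{m-1}$ be the canonical free generators of $\mathrm{F}_{\mathbf{L}}(2m)$, and write $\vec{\mathbf{x}}=(\mathbf{x}_i)_{i<m}$, $\vec{\mathbf{y}}=(\mathbf{y}_i)_{i<m}$. Let $R\in\mathrm{F}_{\mathbf{L}}(n)$. If the inequality \[ U(\vec{\mathbf{x}})\wedge V(\vec{\mathbf{y}})\leq R\bigl(U_j(\vec{\mathbf{x}})\wedge V_j(\vec{\mathbf{y}})\mid j<n\bigr) \] holds in $\mathrm{F}_{\mathbf{L}}(2m)$, then there exists a pure meet polynomial $R^*\leq R$ (in $\mathrm{F}_{\mathbf{L}}(n)$) such that \[ U(\vec{\mathbf{x}})\wedge V(\vec{\mathbf{y}})\leq R^*\bigl(U_j(\vec{\mathbf{x}})\wedge V_j(\vec{\mathbf{y}})\mid j<n\bigr). \]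
   Context: $\mathrm{F}_{\mathbf{L}}(k)$ denotes the free lattice on $k$ generators. A pure meet polynomial in $\mathrm{F}_{\mathbf{L}}(n)$ is an element of the form $\bigwedge_{i\in I}\mathbf{z}_i$, where $\mathbf{z}_0,\dots,\mathbf{z}_{n-1}$ are the free generators of $\mathrm{F}_{\mathbf{L}}(n)$ and $I$ is a nonempty subset of $\{0,1,\dots,n-1\}$. *)

(* Free lattice F_L(k) modelled as lattice terms in k
   variables, with the order of F_L(k): s <= t iff the inequality holds
   in every lattice under every assignment of the variables. *)
From HB Require Import structures.
From mathcomp Require Import all_boot all_order.
Set Implicit Arguments. Unset Strict Implicit. Unset Printing Implicit Defensive.
Import Order.TTheory.
Local Open Scope order_scope.

Inductive lterm (k : nat) : Type :=
| LVar of 'I_k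
| LMeet of lterm k & lterm k
| LJoin of lterm k & lterm k.

Arguments LVar {k}.
Arguments LMeet {k}.
Arguments LJoin {k}.

Fixpoint leval {k : nat} {d : Order.disp_t} {L : latticeType d}
  (a : 'I_k -> L) (t : lterm k) : L :=
  match t with
  | LVar i => a i
  | LMeet s u => leval a s `&` leval a u
  | LJoin s u => leval a s `|` leval a u
  end.

Definition fl_le {k : nat} (s t : lterm k) : Prop :=
  forall (d : Order.disp_t) (L : latticeType d) (a : 'I_k -> L),
    leval a s <= leval a t.

Definition fl_eq {k : nat} (s t : lterm k) : Prop := fl_le s t /\ fl_le t s.

Fixpoint lsubst {n k : nat} (sigma : 'I_n -> lterm k) (t : lterm n) : lterm k :=
  match t with
  | LVar i => sigma i
  | LMeet s u => LMeet (lsubst sigma s) (lsubst sigma u)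
  | LJoin s u => LJoin (lsubst sigma s) (lsubst sigma u)
  end.

Definition xgen {m : nat} (i : 'I_m) : lterm (m + m) := LVar (lshift m i).
Definition ygen {m : nat} (i : 'I_m) : lterm (m + m) := LVar (rshift m i).

Fixpoint meet_list {n : nat} (i0 : 'I_n) (s : seq 'I_n) : lterm n :=
  match s with
  | [::] => LVar i0
  | j :: s' => LMeet (LVar i0) (meet_list j s')
  end.

Definition pure_meet {n : nat} (t : lterm n) : Prop :=
  exists (i0 : 'I_n) (s : seq 'I_n), fl_eq t (meet_list i0 s).

From HB Require Import structures.
From mathcomp Require Import all_boot all_order.
From Stdlib Require Import Classical ClassicalDescription.
Set Implicit Arguments. Unset Strict Implicit. Unset Printing Implicit Defensive.
Import Order.TTheory.
Local Open Scope order_scope.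

(* Write w = U(x) /\ V(y) and s_j = U_j(x) /\ V_j(y).  Neither U(x) nor V(y) lies
   below any term in the s_j: in the two-element lattice send x to 1 and y to 0
   (or conversely), which makes every s_j equal to 0.  By Whitman's condition (W),
   w <= p(s) \/ q(s) therefore forces w <= p(s) or w <= q(s), so by induction R is
   true under the Boolean valuation j |-> [w <= s_j].  The meet R* of the
   variables true under that valuation is then below R, and above w after
   substituting the s_j.
   Condition (W) in the free lattice is proved semantically: if it failed, a
   product of countermodels would give a lattice where a1 /\ a2 <= b1 \/ b2 fails
   (W), and Day's doubling of the interval [a1 /\ a2, b1 \/ b2] would refute
   a1 /\ a2 <= b1 \/ b2 itself. *)

Section Doubling.
Context {disp : Order.disp_t} {P : latticeType disp} (al be : P).

Definition above (u : P) := (al <= u) && ~~ (u <= be).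

Lemma above_le u v : above u -> u <= v -> above v.
Proof.
move=> /andP[le_al_u not_le_u_be] le_uv; rewrite /above (le_trans le_al_u) //=.
by apply: contra not_le_u_be; apply: le_trans.
Qed.

(* Day's doubling P[al, be], encoded as the pairs (u, e) whose bit is forced to
   true when [above u], to false when not [al <= u], and free on [al, be].
   Meets are then componentwise, while a join must raise its bit when it is
   [above]. *)
Definition doubling_pred (x : P *p bool) := (above x.1 ==> x.2) && (x.2 ==> (al <= x.1)).

Definition doubling := {x : P *p bool | doubling_pred x}.

HB.instance Definition _ := [isSub of doubling for (@sval _ doubling_pred)].
HB.instance Definition _ := [Choice of doubling by <:].
HB.instance Definition _ := [SubChoice_isSubPOrder of doubling by <: with Order.Disp tt tt].

Definition dval (x : doubling) : P := (val x).1.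
Definition upper (x : doubling) : bool := (val x).2.

Lemma upper_above x : above (dval x) -> upper x.
Proof. by rewrite /upper /dval; case: x => [[u e] /= /andP[/implyP]]. Qed.

Lemma upper_ge x : upper x -> al <= dval x.
Proof. by rewrite /upper /dval; case: x => [[u e] /= /andP[_ /implyP]]. Qed.

Lemma doubling_leE x y : (x <= y) = (dval x <= dval y) && (upper x ==> upper y).
Proof. by rewrite leEsub leEprod /dval /upper; case: (val x).2; case: (val y).2. Qed.

Fact doubling_meet_subproof (x y : doubling) : doubling_pred (val x `&` val y).
Proof.
rewrite /doubling_pred meetEprod /=; apply/andP; split; apply/implyP.
  move=> a_xy; apply/andP; split; apply: upper_above; apply: (above_le a_xy).
    exact: leIl.
  exact: leIr.
by case/andP=> /upper_ge al_x /upper_ge al_y; rewrite lexI al_x al_y.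
Qed.

Definition dmeet (x y : doubling) : doubling :=
  exist doubling_pred _ (doubling_meet_subproof x y).

Fact doubling_join_subproof (x y : doubling) :
  doubling_pred (dval x `|` dval y, [|| upper x, upper y | above (dval x `|` dval y)]).
Proof.
rewrite /doubling_pred /=; apply/andP; split; apply/implyP.
  by move=> ->; rewrite !orbT.
case/orP=> [/upper_ge al_x|/orP[/upper_ge al_y|/andP[] //]].
  exact: le_trans al_x (leUl _ _).
exact: le_trans al_y (leUr _ _).
Qed.

Definition djoin (x y : doubling) : doubling :=
  exist doubling_pred _ (doubling_join_subproof x y).

Lemma dmeetP (x y z : doubling) : (x <= dmeet y z) = (x <= y) && (x <= z).
Proof. by rewrite !leEsub /= lexI. Qed.

Lemma djoinP (x y z : doubling) : (djoin x y <= z) = (x <= z) && (y <= z).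
Proof.
rewrite !doubling_leE {1}/upper /= leUx.
have [xz|] /= := boolP (dval x <= dval z); last by [].
have [yz|] /= := boolP (dval y <= dval z); last by rewrite andbF.
have above_z : above (dval x `|` dval y) ==> upper z.
  apply/implyP => above_xy; apply/upper_above/(above_le above_xy).
  by rewrite leUx xz yz.
by move: above_z; case: (upper z); case: (upper x); case: (upper y); case: (above _).
Qed.

HB.instance Definition _ :=
  Order.POrder_MeetJoin_isLattice.Build (Order.Disp tt tt) doubling dmeetP djoinP.

Fact lower_subproof u : doubling_pred (u, above u).
Proof. by rewrite /doubling_pred /= implybb; apply/implyP => /andP[]. Qed.

Definition lower (u : P) : doubling := exist doubling_pred _ (lower_subproof u).

Lemma dval_leval_lower k (a : 'I_k -> P) t : dval (leval (lower \o a) t) = leval a t.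
Proof. by elim: t => //= s <- t <-. Qed.

Lemma upper_meet x y : upper (x `&` y) = upper x && upper y.
Proof. by []. Qed.

Lemma upper_join x y : upper (x `|` y) = [|| upper x, upper y | above (dval x `|` dval y)].
Proof. by []. Qed.

Lemma doubling_not_whitman x1 x2 y1 y2 :
  dval x1 `&` dval x2 = al -> dval y1 `|` dval y2 = be ->
  ~~ (dval x1 <= be) -> ~~ (dval x2 <= be) -> ~~ (al <= dval y1) -> ~~ (al <= dval y2) ->
  ~~ (x1 `&` x2 <= y1 `|` y2).
Proof.
move=> meet_al join_be x1_be x2_be al_y1 al_y2.
have upper_x1 : upper x1 by apply: upper_above; rewrite /above x1_be andbT -meet_al leIl.
have upper_x2 : upper x2 by apply: upper_above; rewrite /above x2_be andbT -meet_al leIr.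
have lower_y : ~~ upper (y1 `|` y2).
  rewrite upper_join /above join_be lexx andbF orbF negb_or.
  by rewrite (contra (@upper_ge y1)) ?(contra (@upper_ge y2)).
by rewrite doubling_leE upper_meet upper_x1 upper_x2 (negbTE lower_y) andbF.
Qed.

End Doubling.

Lemma leval_lsubst k n d (L : latticeType d) (a : 'I_k -> L) (sigma : 'I_n -> lterm k) t :
  leval a (lsubst sigma t) = leval (fun i => leval a (sigma i)) t.
Proof. by elim: t => //= s -> u ->. Qed.

Lemma leval_const k d (L : latticeType d) (a : 'I_k -> L) c t :
  (forall i, a i = c) -> leval a t = c.
Proof. by move=> a_c; elim: t => /= [i|s -> u ->|s -> u ->]; rewrite ?meetxx ?joinxx. Qed.

Lemma not_fl_le k (s t : lterm k) :
  ~ fl_le s t -> exists d (L : latticeType d) (a : 'I_k -> L), ~~ (leval a s <= leval a t).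
Proof.
move=> nst; apply: NNPP => no_countermodel; apply: nst => d L a.
by apply/negPn/negP => fails; apply: no_countermodel; exists d, L, a.
Qed.

Section PairAssignment.
Context {k : nat} {d1 d2 : Order.disp_t} {L1 : latticeType d1} {L2 : latticeType d2}.
Variables (a1 : 'I_k -> L1) (a2 : 'I_k -> L2).

Definition pair_assign (i : 'I_k) : L1 *p L2 := (a1 i, a2 i).

Lemma leval_pair_assign t : leval pair_assign t = (leval a1 t, leval a2 t).
Proof. by elim: t => //= s -> u ->. Qed.

Lemma le_leval_pair_assign s t :
  (leval pair_assign s <= leval pair_assign t) =
  (leval a1 s <= leval a1 t) && (leval a2 s <= leval a2 t).
Proof. by rewrite !leval_pair_assign leEprod. Qed.

End PairAssignment.

Lemma fl_whitman k (a1 a2 b1 b2 : lterm k) :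
  fl_le (LMeet a1 a2) (LJoin b1 b2) ->
  [\/ fl_le a1 (LJoin b1 b2), fl_le a2 (LJoin b1 b2),
      fl_le (LMeet a1 a2) b1 | fl_le (LMeet a1 a2) b2].
Proof.
move=> le_ab; apply: NNPP => no_case.
have [d1 [L1 [c1 n1]]] := not_fl_le (fun h => no_case (Or41 _ _ _ h)).
have [d2 [L2 [c2 n2]]] := not_fl_le (fun h => no_case (Or42 _ _ _ h)).
have [d3 [L3 [c3 n3]]] := not_fl_le (fun h => no_case (Or43 _ _ _ h)).
have [d4 [L4 [c4 n4]]] := not_fl_le (fun h => no_case (Or44 _ _ _ h)).
pose c := pair_assign (pair_assign c1 c2) (pair_assign c3 c4).
have := le_ab _ (doubling (leval c (LMeet a1 a2)) (leval c (LJoin b1 b2))) (lower _ _ \o c).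
apply/negP; apply: doubling_not_whitman; rewrite ?dval_leval_lower // !le_leval_pair_assign.
- by rewrite (negbTE n1).
- by rewrite (negbTE n2) andbF.
- by rewrite (negbTE n3) andbF.
- by rewrite (negbTE n4) !andbF.
Qed.

Definition fl_leb k (s t : lterm k) : bool :=
  if excluded_middle_informative (fl_le s t) then true else false.

Lemma fl_lebP k (s t : lterm k) : reflect (fl_le s t) (fl_leb s t).
Proof. by rewrite /fl_leb; case: excluded_middle_informative => h; constructor. Qed.

Section FreeLatticeOrder.
Context {k : nat}.
Implicit Types s t u : lterm k.

Lemma fl_le_meetP s t u : fl_le s (LMeet t u) <-> fl_le s t /\ fl_le s u.
Proof.
split=> [le_s_tu | [le_st le_su] d L a]; last by rewrite /= lexI le_st le_su.
by split=> d L a; have /= := le_s_tu d L a; rewrite lexI => /andP[].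
Qed.

Lemma fl_le_joinl s t u : fl_le s t -> fl_le s (LJoin t u).
Proof. by move=> le_st d L a; apply: le_trans (le_st d L a) (leUl _ _). Qed.

Lemma fl_le_joinr s t u : fl_le s u -> fl_le s (LJoin t u).
Proof. by move=> le_su d L a; apply: le_trans (le_su d L a) (leUr _ _). Qed.

End FreeLatticeOrder.

Section BooleanValuation.
Context {k n : nat} (sigma : 'I_n -> lterm k).

Lemma fl_le_lsubst_of_leval w p :
  leval (fun j => fl_leb w (sigma j)) p -> fl_le w (lsubst sigma p).
Proof.
elim: p => /= [j /fl_lebP //|s IHs u IHu /andP[/IHs ws /IHu wu]|s IHs u IHu].
  exact/fl_le_meetP.
by case/orP=> [/IHs/fl_le_joinl|/IHu/fl_le_joinr].
Qed.

Lemma leval_of_fl_le_lsubst w1 w2 p :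
  (forall q, ~ fl_le w1 (lsubst sigma q)) -> (forall q, ~ fl_le w2 (lsubst sigma q)) ->
  fl_le (LMeet w1 w2) (lsubst sigma p) -> leval (fun j => fl_leb (LMeet w1 w2) (sigma j)) p.
Proof.
move=> w1_low w2_low; elim: p => /= [j /fl_lebP //|s IHs u IHu|s IHs u IHu].
  by case/fl_le_meetP=> /IHs -> /IHu ->.
case/fl_whitman=> [/(w1_low (LJoin s u))[]|/(w2_low (LJoin s u))[]|/IHs ->|/IHu ->] //.
exact: orbT.
Qed.

End BooleanValuation.

Lemma meet_list_le n d (L : latticeType d) (a : 'I_n -> L) i0 s j :
  j \in i0 :: s -> leval a (meet_list i0 s) <= a j.
Proof.
elim: s i0 => [|i s IH] i0; first by rewrite mem_seq1 => /eqP ->.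
rewrite in_cons => /orP[/eqP -> | j_s]; first exact: leIl.
exact: le_trans (leIr _ _) (IH i j_s).
Qed.

Lemma leval_meet_list_bool n (J : 'I_n -> bool) i0 s :
  leval J (meet_list i0 s) = all J (i0 :: s).
Proof. by elim: s i0 => [|i s IH] i0 /=; rewrite ?andbT // IH. Qed.

Definition meet_support n (J : pred 'I_n) (i0 : 'I_n) : lterm n :=
  meet_list i0 [seq j <- enum 'I_n | J j].

Lemma pure_meet_support n (J : pred 'I_n) i0 : pure_meet (meet_support J i0).
Proof. by exists i0, [seq j <- enum 'I_n | J j]; split=> d L a; rewrite lexx. Qed.

Lemma meet_support_le n (J : pred 'I_n) i0 t : leval J t -> fl_le (meet_support J i0) t.
Proof.
elim: t => /= [j Jj|s IHs u IHu /andP[/IHs ms /IHu mu]|s IHs u IHu].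
- by move=> d L a; apply: meet_list_le; rewrite in_cons mem_filter mem_enum Jj orbT.
- exact/fl_le_meetP.
by case/orP=> [/IHs/fl_le_joinl|/IHu/fl_le_joinr].
Qed.

Lemma leval_meet_support n (J : pred 'I_n) i0 : J i0 -> leval J (meet_support J i0).
Proof. by move=> Ji0; rewrite leval_meet_list_bool /= Ji0 filter_all. Qed.

Section Sides.
Context {m : nat}.

Definition side (b : bool) (i : 'I_(m + m)) : bool := (i < m)%N == b.

Lemma leval_side_xgen b (X : lterm m) : leval (side b) (lsubst xgen X) = b.
Proof. by rewrite leval_lsubst; apply: leval_const => i; rewrite /side /= ltn_ord. Qed.

Lemma leval_side_ygen b (X : lterm m) : leval (side b) (lsubst ygen X) = ~~ b.
Proof.
rewrite leval_lsubst; apply: leval_const => i.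
by rewrite /side /= ltnNge leq_addr; case: b.
Qed.

Context {n : nat} (A B : 'I_n -> lterm m).
Let sigma j := LMeet (lsubst xgen (A j)) (lsubst ygen (B j)).

Lemma leval_side_lsubst b q : leval (side b) (lsubst sigma q) = false.
Proof.
rewrite leval_lsubst; apply: leval_const => j.
by rewrite /= leval_side_xgen leval_side_ygen; case: b.
Qed.

Lemma xgen_not_le_lsubst (X : lterm m) q : ~ fl_le (lsubst xgen X) (lsubst sigma q).
Proof. by move/(_ _ _ (side true)); rewrite leval_side_xgen leval_side_lsubst. Qed.

Lemma ygen_not_le_lsubst (Y : lterm m) q : ~ fl_le (lsubst ygen Y) (lsubst sigma q).
Proof. by move/(_ _ _ (side false)); rewrite leval_side_ygen leval_side_lsubst. Qed.

End Sides.

Theorem lemma3p2 (m n : nat) (Hm : 0 < m) (Hn : 0 < n)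
  (U V : lterm m) (Us Vs : 'I_n -> lterm m) (R : lterm n) :
  fl_le (LMeet (lsubst xgen U) (lsubst ygen V))
        (lsubst (fun j => LMeet (lsubst xgen (Us j)) (lsubst ygen (Vs j))) R) ->
  exists Rs : lterm n,
    pure_meet Rs /\ fl_le Rs R /\
    fl_le (LMeet (lsubst xgen U) (lsubst ygen V))
          (lsubst (fun j => LMeet (lsubst xgen (Us j)) (lsubst ygen (Vs j))) Rs).
Proof.
set w := LMeet _ _; set sigma := fun j => _ => le_wR.
pose J j := fl_leb w (sigma j).
have JR : leval J R.
  apply: leval_of_fl_le_lsubst le_wR => q.
    exact: xgen_not_le_lsubst.
  exact: ygen_not_le_lsubst.
have [i0 Ji0 | noJ] := pickP J; last by rewrite (leval_const _ noJ) in JR.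
exists (meet_support J i0); split; first exact: pure_meet_support.
split; first exact: meet_support_le.
by apply: fl_le_lsubst_of_leval; apply: leval_meet_support.
Qed.
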